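(* For any idempotent $e$ of a semigroup $S$, $$\big(\sqrt[\infty]{H_e}\cdot H_e\big)\cup\big(H_e\cdot \sqrt[\infty]{H_e}\big)\subseteq H_e .$$
   Context: For a subset $A$ of a semigroup $S$, $\sqrt[\infty]{A}=\{x\in S:\exists n\in\mathbb N\ (x^n\in A)\}$. $S^1=S\cup\{1\}$ with $1$ an adjoined identity. For $a\in S$, $H_a=\{x\in S: xS^1=aS^1 \text{ and } S^1x=S^1a\}$ is the $\mathcal H$-class of $a$; for an idempotent $e$, $H_e$ is the maximal subgroup of $S$ containing $e$. For sets $A,B\subseteq S$, $A\cdot B=\{ab:a\in A,b\in B\}$. *)

(* A semigroup is a carrier type T with an associative binary
   operation mul; it is passed as explicit binders in the theorem. Subsets of
   S are predicates T -> Prop. *)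
From Stdlib Require Import Arith.
Set Implicit Arguments.
Unset Strict Implicit.

Section Semigroup.
Variables (T : Type) (mul : T -> T -> T).

(* y \in x S^1  (S^1 = S with an adjoined identity) *)
Definition in_rideal1 (x y : T) : Prop := y = x \/ exists s, y = mul x s.
Definition in_lideal1 (x y : T) : Prop := y = x \/ exists s, y = mul s x.

Definition Hclass (a : T) : T -> Prop :=
  fun x => (forall y, in_rideal1 x y <-> in_rideal1 a y) /\
           (forall y, in_lideal1 x y <-> in_lideal1 a y).

(* positive powers: spow x n = x^n for n >= 1 (spow x 0 = x, unused) *)
Definition spow (x : T) (n : nat) : T := Nat.iter (Nat.pred n) (mul x) x.

Definition inf_root (A : T -> Prop) : T -> Prop :=
  fun x => exists n, 1 <= n /\ A (spow x n).

Definition setmul (A B : T -> Prop) : T -> Prop :=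
  fun z => exists a b, A a /\ B b /\ z = mul a b.

End Semigroup.

From Stdlib Require Import Arith Lia.

Set Implicit Arguments.

(* For an idempotent e, membership in the maximal subgroup H_e
   is characterised by four equations: e z = z = z e and z has a right and a
   left "inverse" relative to e ([hclass_iff]).  From this, H_e is closed
   under products ([hclass_mul]), and every y commuting with some g in H_e
   commutes with e ([commute_e]).  If x commutes with p and x p lies in H_e,
   then x e = e x lies in H_e ([hclass_of_divisor]); applied with
   p = x^(2m+1) when x^(m+1) lies in H_e this shows x e = e x in H_e for
   every x in the infinite root of H_e ([hclass_of_root]).  Finally, for such
   x and h in H_e, x h = (x e) h and h x = h (e x) are products of two
   elements of H_e. *)

Section MaximalSubgroup.
Variables (T : Type) (mul : T -> T -> T).
Hypothesis mulA : forall x y z, mul x (mul y z) = mul (mul x y) z.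
Variables (e : T) (he : mul e e = e).

Lemma hclass_iff z :
  Hclass mul e z <->
  mul e z = z /\ mul z e = z /\
  (exists t, mul z t = e) /\ (exists u, mul u z = e).
Proof.
  split.
  - intros [R L]. repeat split.
    + destruct (proj1 (R z) (or_introl eq_refl)) as [Ez | [s Ez]].
      * subst z; exact he.
      * rewrite Ez, mulA, he; reflexivity.
    + destruct (proj1 (L z) (or_introl eq_refl)) as [Ez | [s Ez]].
      * subst z; exact he.
      * rewrite Ez, <- mulA, he; reflexivity.
    + destruct (proj2 (R e) (or_introl eq_refl)) as [E | [t E]].
      * exists z; rewrite <- E; exact he.
      * exists t; symmetry; exact E.
    + destruct (proj2 (L e) (or_introl eq_refl)) as [E | [u E]].
      * exists z; rewrite <- E; exact he.
      * exists u; symmetry; exact E.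
  - intros (eZ & Ze & [t Zt] & [u Uz]). split; intro y; split;
      intros [E | [s E]]; right; subst y.
    + exists z; symmetry; exact eZ.
    + exists (mul z s); rewrite mulA, eZ; reflexivity.
    + exists t; symmetry; exact Zt.
    + exists (mul t s); rewrite mulA, Zt; reflexivity.
    + exists z; symmetry; exact Ze.
    + exists (mul s z); rewrite <- mulA, Ze; reflexivity.
    + exists u; symmetry; exact Uz.
    + exists (mul s u); rewrite <- mulA, Uz; reflexivity.
Qed.

Lemma hclass_left_id z : Hclass mul e z -> mul e z = z.
Proof. intro Hz; apply hclass_iff in Hz; tauto. Qed.

Lemma hclass_right_id z : Hclass mul e z -> mul z e = z.
Proof. intro Hz; apply hclass_iff in Hz; tauto. Qed.

Lemma hclass_mul a b :
  Hclass mul e a -> Hclass mul e b -> Hclass mul e (mul a b).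
Proof.
  intros Ha Hb.
  apply hclass_iff in Ha as (eA & Ae & [a' Aa'] & [a'' A''a]).
  apply hclass_iff in Hb as (eB & Be & [b' Bb'] & [b'' B''b]).
  apply hclass_iff; repeat split.
  - rewrite mulA, eA; reflexivity.
  - rewrite <- mulA, Be; reflexivity.
  - exists (mul b' a').
    rewrite <- mulA, (mulA b b' a'), Bb', mulA, Ae; assumption.
  - exists (mul b'' a'').
    rewrite <- mulA, (mulA a'' a b), A''a, eB; assumption.
Qed.

(* Anything commuting with an element g of H_e commutes with e: indeed
   y e = y g g' = g y g' is fixed by e on the left, and symmetrically. *)
Lemma commute_e y g :
  Hclass mul e g -> mul y g = mul g y -> mul y e = mul e y.
Proof.
  intros Hg Hyg.
  apply hclass_iff in Hg as (eG & Ge & [g' Gg'] & [g'' G''g]).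
  assert (ye_conj : mul y e = mul g (mul y g'))
    by (rewrite <- Gg', mulA, Hyg, <- mulA; reflexivity).
  assert (ey_conj : mul e y = mul (mul g'' y) g)
    by (rewrite <- G''g, <- mulA, <- Hyg, mulA; reflexivity).
  assert (Hye : mul e (mul y e) = mul y e)
    by (rewrite ye_conj, mulA, eG; reflexivity).
  assert (Hey : mul (mul e y) e = mul e y)
    by (rewrite ey_conj, <- mulA, Ge; reflexivity).
  rewrite <- Hye, <- Hey, mulA; reflexivity.
Qed.

Lemma hclass_of_divisor x p :
  mul x p = mul p x -> Hclass mul e (mul x p) ->
  mul x e = mul e x /\ Hclass mul e (mul x e).
Proof.
  intros Hxp Hg.
  assert (xe : mul x e = mul e x).
  { apply (commute_e Hg).
    rewrite Hxp at 1; rewrite mulA; reflexivity. }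
  assert (pe : mul p e = mul e p).
  { apply (commute_e Hg).
    rewrite Hxp at 2; rewrite mulA; reflexivity. }
  split; [exact xe |].
  apply hclass_iff in Hg as (eG & Ge & [t Gt] & [u Ug]).
  apply hclass_iff; repeat split.
  - rewrite xe, mulA, he; reflexivity.
  - rewrite <- mulA, he; reflexivity.
  - exists (mul (mul p e) t).
    assert (e_pe : mul e (mul p e) = mul p e) by (rewrite pe, mulA, he; reflexivity).
    rewrite mulA, <- (mulA x e), e_pe, mulA, Ge; exact Gt.
  - exists (mul u (mul e p)).
    assert (ep_xe : mul (mul e p) (mul x e) = mul x p)
      by (rewrite <- mulA, (mulA p x e), <- Hxp, Ge, eG; reflexivity).
    rewrite <- mulA, ep_xe; exact Ug.
Qed.

Lemma spow_add x a b :
  mul (spow mul x (S a)) (spow mul x (S b)) = spow mul x (S (S (a + b))).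
Proof.
  induction a as [| a IH]; [reflexivity |].
  change (mul (mul x (spow mul x (S a))) (spow mul x (S b))
          = mul x (spow mul x (S (S (a + b))))).
  rewrite <- mulA, IH; reflexivity.
Qed.

(* Every element of the infinite root of H_e commutes with e, and x e lies
   in H_e; take p = x^(2m+1) so that x p = x^(m+1) x^(m+1). *)
Lemma hclass_of_root x :
  inf_root mul (Hclass mul e) x ->
  mul x e = mul e x /\ Hclass mul e (mul x e).
Proof.
  intros [[| m] [Hn Hg]]; [lia |].
  apply (@hclass_of_divisor x (spow mul x (S (m + m)))).
  - change x with (spow mul x 1) at 1 4.
    rewrite !spow_add, Nat.add_0_r; reflexivity.
  - change (mul x (spow mul x (S (m + m)))) with (spow mul x (S (S (m + m)))).
    rewrite <- spow_add; apply hclass_mul; assumption.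
Qed.

End MaximalSubgroup.

Theorem lemma3p1 (T : Type) (mul : T -> T -> T)
  (mulA : forall x y z, mul x (mul y z) = mul (mul x y) z)
  (e : T) (he : mul e e = e) :
  forall z,
    (setmul mul (inf_root mul (Hclass mul e)) (Hclass mul e) z \/
     setmul mul (Hclass mul e) (inf_root mul (Hclass mul e)) z) ->
    Hclass mul e z.
Proof.
  intros z [[x [h [Hx [Hh ->]]]] | [h [x [Hh [Hx ->]]]]];
    destruct (hclass_of_root mulA he Hx) as [xe Hxe].
  - (* x h = (x e) h *)
    rewrite <- (hclass_left_id mulA he Hh), mulA.
    apply hclass_mul; assumption.
  - (* h x = h (e x) *)
    rewrite <- (hclass_right_id mulA he Hh), <- mulA, <- xe.
    apply hclass_mul; assumption.
Qed.
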